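(* Let $A$ be a finite group and let $G$ be a finite group containing $A$ and an element $c$ of order $n$ with $A\cap\langle c\rangle=\{1_G\}$ and $G=A\langle c\rangle$. For $x\in A$ let $\varphi(x)\in A$ and $\Pi(x)\in\mathbb{Z}_n$ be the unique elements with $cx=\varphi(x)c^{\Pi(x)}$, and let $m$ be the order of $\varphi$ (which is a skew-morphism of $A$ with power function $\pi$). Then: (a) $\langle c^m\rangle$ is a normal subgroup of $G$ and $G/\langle c^m\rangle$ is isomorphic to the skew product $A\langle\varphi\rangle$; (b) the subgroup $A\langle c^m\rangle$ is a semidirect product $A\ltimes\langle c^m\rangle$ in which $x^{-1}c^mx=(c^m)^{\sigma_\Pi(x,m)/m}$ for all $x\in A$; (c) $\mathrm{Av}(x)\equiv1\pmod{n/m}$ for all $x\in A$ if and only if $c^m$ is a central element of $G$.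
   Context: A skew-morphism of a finite group $A$ is a permutation $\varphi$ of $A$ with $\varphi(1_A)=1_A$ for which there is a function $\pi:A\to\mathbb{Z}_m$ ($m$ the order of $\varphi$) with $\varphi(xy)=\varphi(x)\varphi^{\pi(x)}(y)$ for all $x,y\in A$. For $f\in\{\pi,\Pi\}$, $\sigma_f(x,0)=0$ and $\sigma_f(x,k)=\sum_{i=1}^{k}f(\varphi^{i-1}(x))$ for $k>0$. The value $\sigma_\Pi(x,m)\in\mathbb{Z}_n$ is divisible by $m$, and $\mathrm{Av}(x)=\frac1m\sigma_\Pi(x,m)\in\mathbb{Z}_{n/m}$. The skew product $A\langle\varphi\rangle$ is the group on the set of formal products $x\varphi^i$ ($x\in A$, $i\in\mathbb{Z}_m$) with multiplication $x\varphi^i\cdot y\varphi^j=x\varphi^i(y)\varphi^{\sigma_\pi(y,i)+j}$. *)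

From mathcomp Require Import all_boot fingroup morphism quotient gproduct center.
Set Implicit Arguments. Unset Strict Implicit. Unset Printing Implicit Defensive.
Local Open Scope group_scope.

(* sigma_f(x,k) = sum_{i=1}^{k} f(phi^{i-1}(x)), computed in nat
   (reduce modulo the appropriate modulus where used). *)
Definition sigma (gT : Type) (f : gT -> nat) (phi : gT -> gT) (x : gT) (k : nat)
  : nat := \sum_(i < k) f (iter i phi x).

(* Multiplication of the skew product A<phi>, whose elements x phi^i are
   represented by pairs (x, i) with x in A and i < m:
   (x phi^i) (y phi^j) = x phi^i(y) phi^(sigma_pi(y,i) + j). *)
Definition skew_mul (gT : finGroupType) (phi : gT -> gT) (pi : gT -> nat)
  (m : nat) (a b : gT * nat) : gT * nat :=
  ((a.1 * iter a.2 phi b.1)%g, ((sigma pi phi b.1 a.2 + b.2) %% m)%N).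

From mathcomp Require Import all_boot fingroup morphism quotient gproduct center.
From mathcomp Require Import zmodp cyclic.

Set Implicit Arguments.
Unset Strict Implicit.
Unset Printing Implicit Defensive.

Local Open Scope group_scope.

(* Iterating c x = phi(x) c^Pi(x) gives c^k x = phi^k(x) c^sigma_Pi(x,k), so by
   uniqueness of the factorization x c^i in G = A<c> the order m of phi divides
   n = #[c], and (c^m)^x = c^sigma_Pi(x,m).  The latter element passes every
   y in A with trivial phi-part, as c^m does, so sigma_Pi(x,m) is a period of
   phi, hence a multiple of m: A normalises <c^m>, giving (a) and (b), and the
   coordinates (x, i mod m) of the cosets of <c^m> multiply as in A<phi>.
   Finally c^m is central iff (c^m)^x = c^m for all x in A, i.e. iff
   sigma_Pi(x,m)/m = 1 modulo #[c^m] = n/m. *)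

Lemma iter_period_dvdn (T : Type) (f : T -> T) (D : {pred T}) (m k : nat) :
  (0 < m)%N -> {in D, forall x, iter m f x = x} ->
  (forall j, (0 < j)%N -> {in D, forall x, iter j f x = x} -> (m <= j)%N) ->
  {in D, forall x, iter k f x = x} -> (m %| k)%N.
Proof.
move=> m_gt0 fm m_min fk.
have fr : {in D, forall x, iter (k %% m) f x = x}.
  move=> x Dx; have fqm : iter (k %/ m * m) f x = x.
    by rewrite iterM; elim: (k %/ m) => //= q ->; apply: fm.
  by rewrite -{1}fqm -iterD addnC -divn_eq fk.
rewrite /dvdn; case: posnP => // r_gt0.
by have := m_min _ r_gt0 fr; rewrite leqNgt ltn_pmod.
Qed.

Definition cycle_exp (gT : finGroupType) (c y : gT) : nat :=
  invm (injm_Zpm c) y.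

Lemma expg_cycle_exp (gT : finGroupType) (c y : gT) :
  y \in <[c]> -> c ^+ cycle_exp c y = y.
Proof. by rewrite -{1}im_Zpm => /(invmK (injm_Zpm c)). Qed.

Section SkewFactorization.

Variables (gT : finGroupType) (A G : {group gT}) (c : gT).
Variables (phi : gT -> gT) (Pi : gT -> nat) (m : nat).

Hypothesis tiAC : A :&: <[c]> = 1.
Hypothesis defG : A * <[c]> = G.
Hypothesis phiA : {in A, forall x, phi x \in A}.
Hypothesis mulcA : {in A, forall x, c * x = phi x * c ^+ Pi x}.
Hypothesis m_gt0 : (0 < m)%N.
Hypothesis phim : {in A, forall x, iter m phi x = x}.
Hypothesis m_min :
  forall k, (0 < k)%N -> {in A, forall x, iter k phi x = x} -> (m <= k)%N.

Local Notation H := <[c ^+ m]>.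

Lemma memG_mul_expc x i : x \in A -> x * c ^+ i \in G.
Proof. by move=> Ax; rewrite -defG mem_mulg ?mem_cycle. Qed.

Lemma cycle_subG_G : <[c]> \subset G.
Proof. by rewrite -defG mulG_subr. Qed.

Lemma mem_iter_phi k : {in A, forall x, iter k phi x \in A}.
Proof. by elim: k => [|k IHk] x Ax //=; rewrite phiA ?IHk. Qed.

Lemma expc_mulE k :
  {in A, forall x, c ^+ k * x = iter k phi x * c ^+ sigma Pi phi x k}.
Proof.
elim: k => [|k IHk] x Ax; first by rewrite /sigma big_ord0 !expg0 mul1g mulg1.
rewrite expgS -mulgA IHk // mulgA mulcA ?mem_iter_phi // -mulgA -expgD.
by rewrite /sigma big_ord_recr /= addnC.
Qed.

Lemma mulg_cycle_injl x y i j :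
  x \in A -> y \in A -> x * c ^+ i = y * c ^+ j -> x = y.
Proof.
move=> Ax Ay eq_xy.
by rewrite -(divgrMid tiAC Ax (mem_cycle c i)) eq_xy divgrMid ?mem_cycle.
Qed.

Lemma iter_phi_order : {in A, forall x, iter #[c] phi x = x}.
Proof.
move=> x Ax; apply/esym/(@mulg_cycle_injl _ _ 0 (sigma Pi phi x #[c])) => //.
  exact: mem_iter_phi.
by rewrite expg0 mulg1 -expc_mulE // expg_order mul1g.
Qed.

Lemma dvdn_period_order : (m %| #[c])%N.
Proof. exact: iter_period_dvdn m_gt0 phim m_min iter_phi_order. Qed.

Lemma conjg_expc : {in A, forall x, (c ^+ m) ^ x = c ^+ sigma Pi phi x m}.
Proof. by move=> x Ax; rewrite conjgE expc_mulE // phim // mulKg. Qed.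

Lemma iter_phi_sigma x :
  x \in A -> {in A, forall y, iter (sigma Pi phi x m) phi y = y}.
Proof.
move=> Ax y Ay; have Axy : x * y \in A by rewrite groupM.
have cs_y : c ^+ sigma Pi phi x m * y = y * c ^+ sigma Pi phi (x * y) m.
  by rewrite -conjg_expc // conjgE -!mulgA expc_mulE // phim // mulgA mulKg.
have := expc_mulE (sigma Pi phi x m) Ay.
by rewrite cs_y => /(mulg_cycle_injl Ay (mem_iter_phi _ Ay)) <-.
Qed.

Lemma dvdn_period_sigma x : x \in A -> (m %| sigma Pi phi x m %% #[c])%N.
Proof.
move=> Ax; have := iter_period_dvdn m_gt0 phim m_min (iter_phi_sigma Ax).
by rewrite /dvdn (modn_dvdm _ dvdn_period_order).
Qed.

Lemma conjg_expc_Av x : x \in A ->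
  (c ^+ m) ^ x = (c ^+ m) ^+ ((sigma Pi phi x m %% #[c]) %/ m).
Proof.
move=> Ax; rewrite conjg_expc // -expgM mulnC divnK ?dvdn_period_sigma //.
by rewrite expg_mod_order.
Qed.

Lemma norms_cycle_expcA : A \subset 'N(H).
Proof.
apply/subsetP=> x Ax.
by rewrite -cycle_subG norms_cycle conjg_expc_Av ?mem_cycle.
Qed.

Lemma cycle_expc_tiA : H :&: A = 1.
Proof. by apply/trivgP; rewrite -tiAC setIC; exact: setSI (cycleX c m). Qed.

Lemma sdprod_cycle_expc : H ><| A = A * H.
Proof.
by rewrite sdprodE ?cycle_expc_tiA ?norms_cycle_expcA ?(normC norms_cycle_expcA).
Qed.

Lemma conjg_expc_fixE x : x \in A ->
  ((c ^+ m) ^ x == c ^+ m) =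
  ((sigma Pi phi x m %% #[c]) %/ m == 1 %[mod #[c] %/ m]).
Proof.
move=> Ax; rewrite conjg_expc_Av // -{2}(expg1 (c ^+ m)) eq_expg_mod_order.
by rewrite orderXdiv ?dvdn_period_order.
Qed.

Lemma expc_in_center :
  c ^+ m \in 'Z(G) <-> {in A, forall x, (c ^+ m) ^ x = c ^+ m}.
Proof.
split=> [/centerP[_ cGcm] x Ax | fixA].
  by rewrite conjgE (cGcm x) ?mulKg // -defG -[x]mulg1 mem_mulg ?group1.
apply/centerP; split=> [|g]; first exact: subsetP cycle_subG_G _ (mem_cycle c m).
rewrite -defG => /mulsgP[x _ Ax /cycleP[i ->] ->].
apply: commuteM; first by rewrite /commute conjgC fixA.
exact/commuteX2/commute_refl.
Qed.

Lemma Av_center_iff :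
  (forall x, x \in A ->
     ((sigma Pi phi x m %% #[c]) %/ m) %% (#[c] %/ m) = 1 %% (#[c] %/ m))%N
  <-> c ^+ m \in 'Z(G).
Proof.
split=> [Av1 | /expc_in_center fixA x Ax].
  by apply/expc_in_center => x Ax; apply/eqP; rewrite conjg_expc_fixE ?Av1.
by apply/eqP; rewrite -conjg_expc_fixE ?fixA.
Qed.

Lemma normal_cycle_expc : H <| G.
Proof.
rewrite /normal (subset_trans (cycleX c m) cycle_subG_G) -defG mulG_subG.
by rewrite norms_cycle_expcA sub_abelian_norm ?cycle_abelian ?cycleX.
Qed.

Lemma normG_mul_expc x i : x \in A -> x * c ^+ i \in 'N(H).
Proof.
by move=> Ax; apply: subsetP (normal_norm normal_cycle_expc) _ (memG_mul_expc i Ax).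
Qed.

Lemma coset_expc_modm x i : coset H (x * c ^+ i) = coset H (x * c ^+ (i %% m)).
Proof.
rewrite {1}(divn_eq i m) addnC expgD mulgA coset_kerr //.
by rewrite mulnC expgM mem_cycle.
Qed.

Lemma coset_mul_expc_inj x y i j : x \in A -> y \in A ->
  coset H (x * c ^+ i) = coset H (y * c ^+ j) -> x = y /\ i = j %[mod m].
Proof.
move=> Ax Ay eq_coset.
have Nxi := normG_mul_expc i Ax; have Nyj := normG_mul_expc j Ay.
have /cycleP[k def_k] : (y * c ^+ j)^-1 * (x * c ^+ i) \in H.
  apply: coset_idr; first by rewrite groupM ?groupV.
  by rewrite morphM ?groupV // morphV //= eq_coset mulVg.
have eq_xy : x * c ^+ i = y * c ^+ (j + m * k).
  by rewrite expgD mulgA expgM -def_k mulKVg.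
have x_y := mulg_cycle_injl Ax Ay eq_xy; split=> //.
move: eq_xy; rewrite x_y => /mulgI/eqP; rewrite eq_expg_mod_order.
move=> /eqP/(congr1 (modn^~ m)); rewrite /= !(modn_dvdm _ dvdn_period_order).
by rewrite addnC mulnC modnMDl.
Qed.

Definition skew_coords (u : coset_of H) : gT * nat :=
  (divgr A <[c]> (repr u), cycle_exp c (remgr A <[c]> (repr u)) %% m).

Lemma skew_coordsP u : u \in G / H ->
  [/\ (skew_coords u).1 \in A, ((skew_coords u).2 < m)%N
    & u = coset H ((skew_coords u).1 * c ^+ (skew_coords u).2)].
Proof.
move=> Gu; have : repr u \in coset H @*^-1 (G / H).
  apply: mem_morphpre (repr_coset_norm u) _.
  by change (coset H (repr u) \in G / H); rewrite coset_reprK.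
rewrite quotientGK ?normal_cycle_expc // -defG => Gr.
split; [exact: mem_divgr | exact: ltn_pmod |].
by rewrite -coset_expc_modm expg_cycle_exp ?mem_remgr // -divgr_eq coset_reprK.
Qed.

Lemma skew_coords_coset x i :
  x \in A -> skew_coords (coset H (x * c ^+ i)) = (x, i %% m)%N.
Proof.
move=> Ax.
have [] := skew_coordsP (mem_quotient H (memG_mul_expc i Ax)).
case: (skew_coords _) => y j /= Ay lt_jm def_u.
have [<- eq_ij] := coset_mul_expc_inj Ax Ay def_u.
by rewrite eq_ij modn_small.
Qed.

Lemma skew_coordsM : {in G / H &, forall u v,
  skew_coords (u * v) =
  skew_mul phi (fun x => Pi x %% m)%N m (skew_coords u) (skew_coords v)}.
Proof.
move=> u v /skew_coordsP + /skew_coordsP.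
case: (skew_coords u) (skew_coords v) => [x i] [y j] /= [Ax _ ->] [Ay _ ->].
rewrite -morphM ?normG_mul_expc //.
have -> : x * c ^+ i * (y * c ^+ j) =
          x * iter i phi y * c ^+ (sigma Pi phi y i + j).
  by rewrite expgD !mulgA -(mulgA x) expc_mulE // !mulgA.
rewrite skew_coords_coset ?groupM ?mem_iter_phi // /skew_mul; congr pair.
by rewrite -modnDml /sigma -modn_summ modnDml.
Qed.

Lemma quotient_skew_product :
  exists f : coset_of H -> gT * nat,
    {in G / H &, injective f} /\
    (forall u, u \in G / H -> (f u).1 \in A /\ ((f u).2 < m)%N) /\
    (forall x i, x \in A -> (i < m)%N -> exists2 u, u \in G / H & f u = (x, i)) /\
    {in G / H &, forall u v,
       f (u * v) = skew_mul phi (fun x => Pi x %% m)%N m (f u) (f v)}.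
Proof.
exists skew_coords; split; [|split; [|split]].
- move=> u v Gu Gv eq_uv.
  by have [_ _ ->] := skew_coordsP Gu; have [_ _ ->] := skew_coordsP Gv; rewrite eq_uv.
- by move=> u /skew_coordsP[].
- move=> x i Ax lt_im; exists (coset H (x * c ^+ i)).
    exact/mem_quotient/memG_mul_expc.
  by rewrite skew_coords_coset ?modn_small.
- exact: skew_coordsM.
Qed.

End SkewFactorization.

Theorem proposition4p1 (gT : finGroupType) (A G : {group gT}) (c : gT)
  (phi : gT -> gT) (Pi : gT -> nat) (m : nat) :
  A \subset G -> c \in G ->
  A :&: <[c]> = 1 -> A * <[c]> = G ->
  (* phi(x) in A and Pi(x) in Z_n (n = #[c]) with c x = phi(x) c^Pi(x) *)
  (forall x, x \in A -> phi x \in A /\ (Pi x < #[c])%N /\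
                        c * x = phi x * c ^+ Pi x) ->
  (* m is the order of the permutation phi of A *)
  (0 < m)%N -> (forall x, x \in A -> iter m phi x = x) ->
  (forall k, (0 < k)%N -> (forall x, x \in A -> iter k phi x = x) -> (m <= k)%N) ->
  let pi := fun x => (Pi x %% m)%N in
  let H := <[c ^+ m]> in
  (* (a) *)
  (H <| G /\
   exists f : coset_of H -> gT * nat,
     {in G / H &, injective f} /\
     (forall u, u \in G / H -> (f u).1 \in A /\ ((f u).2 < m)%N) /\
     (forall x i, x \in A -> (i < m)%N -> exists2 u, u \in G / H & f u = (x, i)) /\
     {in G / H &, forall u v, f (u * v) = skew_mul phi pi m (f u) (f v)})
  /\
  (* (b) *)
  (H ><| A = A * H /\
   forall x, x \in A -> (c ^+ m) ^ x = (c ^+ m) ^+ ((sigma Pi phi x m %% #[c]) %/ m))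
  /\
  (* (c) *)
  ((forall x, x \in A ->
      ((sigma Pi phi x m %% #[c]) %/ m) %% (#[c] %/ m) = 1 %% (#[c] %/ m))%N
   <-> c ^+ m \in 'Z(G)).
Proof.
(* A \subset G and c \in G are implied by A * <[c]> = G. *)
move=> _ _ tiAC defG cxA m_gt0 phim m_min pi H.
have phiA : {in A, forall x, phi x \in A} by move=> x /cxA[].
have mulcA : {in A, forall x, c * x = phi x * c ^+ Pi x} by move=> x /cxA[_ []].
split; [split | split; [split |]].
- exact: normal_cycle_expc tiAC defG phiA mulcA m_gt0 phim m_min.
- exact: quotient_skew_product tiAC defG phiA mulcA m_gt0 phim m_min.
- exact: sdprod_cycle_expc tiAC phiA mulcA m_gt0 phim m_min.
- exact: conjg_expc_Av tiAC phiA mulcA m_gt0 phim m_min.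
- exact: Av_center_iff tiAC defG phiA mulcA m_gt0 phim m_min.
Qed.
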